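(* Let $S$ be a numerical semigroup with minimal generators $e<a_1<\dots<a_t$ and blowup $B$. Let $f\in\operatorname{Ap}(B;e)$, $s=f+\min{\rm ord}(f;B^{\mathcal D})e$ and $s'=f+{\rm ord}(f;B^{\mathcal D})e$. Then $s,s'\in S$, and for all integers $k\ge0$: (1) ${\rm adj}(s+ke)=f$; (2) ${\rm d}_{\max}(s'+ke;S)=d(f;B^{\mathcal D})$.
   Context: A numerical semigroup is a submonoid of $(\mathbb N,+)$ with finite complement. An $S$-factorization of $n$ is $(c_0,\dots,c_t)\in\mathbb N^{t+1}$ with $c_0e+\sum c_ia_i=n$, of length $\sum c_i$. ${\rm ord}(n;S)$ is the maximal such length, and ${\rm d}_{\max}(n;S)$ is the number of factorizations of that length. Let $d_i=a_i-e$, let $B=\langle e,d_1,\dots,d_t\rangle$ be the blowup, and $\mathcal D=(e,d_1,\dots,d_t)$. A $B^{\mathcal D}$-factorization of $b\in B$ is $(x_0,\dots,x_t)\in\mathbb N^{t+1}$ with $x_0e+\sum x_id_i=b$, of length $\sum x_i$. $\min{\rm ord}(b;B^{\mathcal D})$ and ${\rm ord}(b;B^{\mathcal D})$ are the minimal and maximal lengths of such factorizations, and $d(b;B^{\mathcal D})$ is their number. $\operatorname{Ap}(B;e)=\{w\in B:w-e\notin B\}$. The adjustment is ${\rm adj}(u)=u-{\rm ord}(u;S)e$ for $u\in S$. *)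

From mathcomp Require Import all_boot all_algebra.
Set Implicit Arguments. Unset Strict Implicit. Unset Printing Implicit Defensive.

(* Since all generators are >= 1, every coefficient is
   <= n, so factorizations are faithfully represented as finite functions
   'I_(size g) -> 'I_n.+1. *)
Definition factorizations (g : seq nat) (n : nat) : {set {ffun 'I_(size g) -> 'I_n.+1}} :=
  [set c : {ffun 'I_(size g) -> 'I_n.+1} | \sum_(i < size g) (c i : nat) * nth 0 g i == n].

Definition flen (g : seq nat) (n : nat) (c : {ffun 'I_(size g) -> 'I_n.+1}) : nat :=
  \sum_(i < size g) (c i : nat).

Definition inS (g : seq nat) (n : nat) : bool := factorizations g n != set0.

Definition ordg (g : seq nat) (n : nat) : nat :=
  \max_(c in factorizations g n) flen c.

(* min ord(n; g): minimal length of a factorization (the default value n of the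
   fold is never smaller than an actual length when all generators are >= 1,
   and the set of factorizations is nonempty whenever n is in the monoid). *)
Definition minordg (g : seq nat) (n : nat) : nat :=
  \big[minn/n]_(c in factorizations g n) flen c.

Definition nfact (g : seq nat) (n : nat) : nat := #|factorizations g n|.

Definition dmax (g : seq nat) (n : nat) : nat :=
  #|[set c in factorizations g n | flen c == ordg g n]|.

Definition drop_at (i : nat) (g : seq nat) : seq nat := take i g ++ drop i.+1 g.

Definition num_semigroup_mingens (g : seq nat) : Prop :=
  [/\ 0 < head 0 g,
      sorted ltn g,
      (forall i, i < size g -> ~~ inS (drop_at i g) (nth 0 g i))
    & exists N, forall n, N <= n -> inS g n].

(* Generators of the blowup with the distinguished generating list
   D = (e, d_1, ..., d_t), d_i = a_i - e. *)
Definition blowup_gens (e : nat) (a : seq nat) : seq nat := e :: map (fun x => x - e) a.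

(* Apéry set Ap(B; e) = {w in B : w - e notin B} (w - e is an integer). *)
Definition in_Apery (g : seq nat) (e w : nat) : bool :=
  inS g w && ((w < e) || ~~ inS g (w - e)).

Definition adj (g : seq nat) (e u : nat) : int := (u%:Z - (ordg g u * e)%:Z)%R.

From mathcomp Require Import all_boot all_order all_algebra zify.
Set Implicit Arguments. Unset Strict Implicit. Unset Printing Implicit Defensive.
Import Order.TTheory.

(** Writing [a_i = d_i + e], an [S]-factorization [c] of [n] of length [L]
    satisfies [n = L e + sum_(i >= 1) c_i d_i].  Hence every [S]-factorization
    of [f + N e] of length [L > N] would give a [B^D]-factorization of [f] with
    positive [e]-coefficient [L - N], impossible for [f] in the Apéry set.  So
    [ord(f + N e; S) <= N], with equality exactly for the factorizations
    [(N - |x|, x_1, ..., x_t)] coming from the [B^D]-factorizations [x] of [f]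
    (all of which have [x_0 = 0]) of length [|x| <= N].  Taking
    [N = min ord + k] gives [adj = f]; taking [N = ord + k] makes this a
    bijection onto the maximal-length factorizations. *)

(* Coefficients indexed by [nat] rather than by ordinals; junk value [0] out of
   range. *)
Definition coef m n (c : {ffun 'I_m -> 'I_n.+1}) (j : nat) : nat :=
  if insub j is Some i then nat_of_ord (c i) else 0.

Lemma coef_ord m n (c : {ffun 'I_m -> 'I_n.+1}) (i : 'I_m) : coef c i = c i.
Proof. by rewrite /coef valK. Qed.

Lemma coef_inj m n (c1 c2 : {ffun 'I_m -> 'I_n.+1}) :
  (forall j, j < m -> coef c1 j = coef c2 j) -> c1 = c2.
Proof.
by move=> eq_c; apply/ffunP => i; apply: val_inj; rewrite /= -!coef_ord eq_c.
Qed.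

Definition fweight (g : seq nat) (x : nat -> nat) : nat :=
  \sum_(i < size g) x i * nth 0 g i.

Section Factorizations.
Variables (g : seq nat) (n : nat).
Implicit Type c : {ffun 'I_(size g) -> 'I_n.+1}.

Lemma factorizationsE c : (c \in factorizations g n) = (fweight g (coef c) == n).
Proof. by rewrite inE; congr (_ == _); apply: eq_bigr => i _; rewrite coef_ord. Qed.

Lemma flenE c : flen c = \sum_(i < size g) coef c i.
Proof. by apply: eq_bigr => i _; rewrite coef_ord. Qed.

Lemma inS_factorization c : c \in factorizations g n -> inS g n.
Proof. by move=> c_fact; apply/set0Pn; exists c. Qed.

Lemma leq_flen_ordg c : c \in factorizations g n -> flen c <= ordg g n.
Proof. exact: leq_bigmax_cond. Qed.

Lemma ordg_attained :
  inS g n -> exists2 c, c \in factorizations g n & flen c = ordg g n.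
Proof.
case/set0Pn => c0 c0_fact.
have /(eq_bigmax_cond (@flen g n)) [c c_fact max_c] : 0 < #|factorizations g n|.
  by apply/card_gt0P; exists c0.
by exists c => //; symmetry; exact: max_c.
Qed.

Hypothesis g_pos : 0 \notin g.

Lemma nth_gens_gt0 i : i < size g -> 0 < nth 0 g i.
Proof.
by move=> lt_i; rewrite lt0n; apply: contraNneq g_pos => <-; rewrite mem_nth.
Qed.

Lemma leq_sum_fweight (x : nat -> nat) : \sum_(i < size g) x i <= fweight g x.
Proof. by apply: leq_sum => i _; rewrite leq_pmulr // nth_gens_gt0. Qed.

Definition factorization_of (x : nat -> nat) : {ffun 'I_(size g) -> 'I_n.+1} :=
  [ffun i : 'I_(size g) => inord (x i)].

Lemma coef_factorization_of x j :
  fweight g x = n -> j < size g -> coef (factorization_of x) j = x j.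
Proof.
move=> wx lt_j; rewrite -[j]/(nat_of_ord (Ordinal lt_j)) coef_ord ffunE inordK //.
rewrite ltnS -wx; apply: leq_trans (leq_sum_fweight x).
by rewrite (bigD1 (Ordinal lt_j)) //= leq_addr.
Qed.

Lemma factorization_ofP x :
  fweight g x = n -> factorization_of x \in factorizations g n.
Proof.
move=> wx; rewrite factorizationsE; apply/eqP; rewrite -[RHS]wx.
by apply: eq_bigr => i _; rewrite coef_factorization_of.
Qed.

Lemma flen_factorization_of x :
  fweight g x = n -> flen (factorization_of x) = \sum_(i < size g) x i.
Proof.
by move=> wx; rewrite flenE; apply: eq_bigr => i _; rewrite coef_factorization_of.
Qed.

Lemma minordg_attained :
  inS g n -> exists2 c, c \in factorizations g n & flen c = minordg g n.
Proof.
case/set0Pn => c0 c0_fact.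
have flen_le c : c \in factorizations g n -> flen c <= n.
  rewrite factorizationsE flenE => /eqP w_c.
  by rewrite -[X in _ <= X]w_c leq_sum_fweight.
have [c c_fact] := @eq_bigmin _ _ _ n c0 (mem (factorizations g n)) _ c0_fact flen_le.
by rewrite minEnat => min_c; exists c.
Qed.

End Factorizations.

Definition with_head (v : nat) (x : nat -> nat) (j : nat) : nat :=
  if j is _.+1 then x j else v.

Section Blowup.
Variables (e : nat) (a : seq nat).
Hypotheses (e_gt0 : 0 < e) (a_gt_e : all (ltn e) a).

Local Notation B := (blowup_gens e a).
Local Notation S := (e :: a).

Definition tail_weight (x : nat -> nat) : nat :=
  \sum_(i < size a) x i.+1 * (nth 0 a i - e).

Definition tail_len (x : nat -> nat) : nat := \sum_(i < size a) x i.+1.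

Lemma size_blowup_gens : size B = size S.
Proof. by rewrite /= size_map. Qed.

Lemma blowup_gens_pos : 0 \notin B.
Proof.
rewrite inE negb_or eq_sym -lt0n e_gt0 /=; apply/mapP => -[z z_a].
have : e < z := allP a_gt_e z z_a.
by rewrite -subn_gt0 => /[swap] <-.
Qed.

Lemma mingens_pos : 0 \notin S.
Proof.
rewrite inE negb_or eq_sym -lt0n e_gt0 /=; apply/negP => a0.
by have := allP a_gt_e 0 a0.
Qed.

Lemma fweight_blowup x : fweight B x = x 0 * e + tail_weight x.
Proof.
rewrite /fweight size_blowup_gens big_ord_recl; congr (_ + _).
by apply: eq_bigr => i _; rewrite lift0 /= (nth_map 0).
Qed.

Lemma fweight_mingens x : fweight S x = x 0 * e + tail_weight x + tail_len x * e.
Proof.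
rewrite /fweight big_ord_recl -addnA /= /tail_len big_distrl -big_split /=.
congr (_ + _); apply: eq_bigr => i _.
by rewrite -mulnDr subnK //; exact: ltnW (allP a_gt_e _ (mem_nth 0 (ltn_ord i))).
Qed.

Lemma sum_mingens (x : nat -> nat) : \sum_(i < size S) x i = x 0 + tail_len x.
Proof. by rewrite big_ord_recl. Qed.

Lemma sum_blowup (x : nat -> nat) : \sum_(i < size B) x i = x 0 + tail_len x.
Proof. by rewrite size_blowup_gens big_ord_recl. Qed.

Lemma tail_weight_with_head v x : tail_weight (with_head v x) = tail_weight x.
Proof. by []. Qed.

Lemma tail_len_with_head v x : tail_len (with_head v x) = tail_len x.
Proof. by []. Qed.

Lemma eq_tail_weight x x' :
  (forall i, i < size a -> x i.+1 = x' i.+1) -> tail_weight x = tail_weight x'.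
Proof. by move=> eq_x; apply: eq_bigr => i _; rewrite eq_x. Qed.

Lemma flen_blowup n (c : {ffun 'I_(size B) -> 'I_n.+1}) :
  flen c = coef c 0 + tail_len (coef c).
Proof. by rewrite flenE sum_blowup. Qed.

Lemma flen_mingens n (c : {ffun 'I_(size S) -> 'I_n.+1}) :
  flen c = coef c 0 + tail_len (coef c).
Proof. by rewrite flenE sum_mingens. Qed.

Lemma mingens_factorization_weight n (c : {ffun 'I_(size S) -> 'I_n.+1}) :
  c \in factorizations S n -> tail_weight (coef c) + flen c * e = n.
Proof.
rewrite factorizationsE fweight_mingens flen_mingens => /eqP; apply: etrans.
by rewrite mulnDl addnA (addnC (tail_weight _)).
Qed.

Variable f : nat.
Hypothesis f_Apery : in_Apery B e f.

Lemma apery_coef0 (y : {ffun 'I_(size B) -> 'I_f.+1}) :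
  y \in factorizations B f -> coef y 0 = 0.
Proof.
rewrite factorizationsE fweight_blowup => /eqP.
case: (coef y 0) => [//|v]; rewrite mulSn -addnA => w_y.
have w_v : fweight B (with_head v (coef y)) = f - e.
  by rewrite fweight_blowup tail_weight_with_head /=; move: (tail_weight _) w_y; lia.
case/andP: f_Apery => _.
rewrite (inS_factorization (factorization_ofP blowup_gens_pos w_v)) orbF.
by move=> lt_fe; lia.
Qed.

Lemma flen_mingens_le N (c : {ffun 'I_(size S) -> 'I_(f + N * e).+1}) :
  c \in factorizations S (f + N * e) -> flen c <= N.
Proof.
move/mingens_factorization_weight => w_c; rewrite leqNgt; apply/negP => lt_N.
have w_x : fweight B (with_head (flen c - N) (coef c)) = f.
  rewrite fweight_blowup tail_weight_with_head /= mulnBl.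
  have := leq_mul (ltnW lt_N) (leqnn e); move: (tail_weight _) w_c; lia.
have := apery_coef0 (factorization_ofP blowup_gens_pos w_x).
rewrite (coef_factorization_of blowup_gens_pos) //= => /eqP.
by rewrite subn_eq0 leqNgt lt_N.
Qed.

Lemma tail_weight_max_len N (c : {ffun 'I_(size S) -> 'I_(f + N * e).+1}) :
  c \in factorizations S (f + N * e) -> flen c = N -> tail_weight (coef c) = f.
Proof.
by move/mingens_factorization_weight => w_c flen_c; move: w_c; rewrite flen_c; lia.
Qed.

Lemma tail_weight_apery (y : {ffun 'I_(size B) -> 'I_f.+1}) :
  y \in factorizations B f -> tail_weight (coef y) = f.
Proof.
move=> y_fact; move: (y_fact); rewrite factorizationsE fweight_blowup.
by rewrite apery_coef0 // => /eqP.
Qed.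

Lemma flen_apery (y : {ffun 'I_(size B) -> 'I_f.+1}) :
  y \in factorizations B f -> flen y = tail_len (coef y).
Proof. by move=> y_fact; rewrite flen_blowup apery_coef0. Qed.

Definition lift_fact N (y : {ffun 'I_(size B) -> 'I_f.+1}) :
    {ffun 'I_(size S) -> 'I_(f + N * e).+1} :=
  factorization_of S (f + N * e) (with_head (N - flen y) (coef y)).

Definition proj_fact n (c : {ffun 'I_(size S) -> 'I_n.+1}) :
    {ffun 'I_(size B) -> 'I_f.+1} :=
  factorization_of B f (with_head 0 (coef c)).

Section Lift.
Variables (N : nat) (y : {ffun 'I_(size B) -> 'I_f.+1}).
Hypotheses (y_fact : y \in factorizations B f) (y_len : flen y <= N).

Lemma fweight_lift : fweight S (with_head (N - flen y) (coef y)) = f + N * e.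
Proof.
rewrite fweight_mingens /= tail_weight_with_head tail_len_with_head.
rewrite tail_weight_apery // -flen_apery // mulnBl.
have := leq_mul y_len (leqnn e); move: (flen y * e); lia.
Qed.

Lemma lift_factP : lift_fact N y \in factorizations S (f + N * e).
Proof. exact: (factorization_ofP mingens_pos fweight_lift). Qed.

Lemma flen_lift : flen (lift_fact N y) = N.
Proof.
rewrite (flen_factorization_of mingens_pos fweight_lift) sum_mingens /=.
by rewrite tail_len_with_head -flen_apery // subnK.
Qed.

Lemma coef_lift j :
  j < size S -> coef (lift_fact N y) j = with_head (N - flen y) (coef y) j.
Proof. exact: (coef_factorization_of mingens_pos fweight_lift). Qed.

Lemma proj_lift : proj_fact (lift_fact N y) = y.
Proof.
have coef_lift_tail i : i < size a -> coef (lift_fact N y) i.+1 = coef y i.+1.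
  by move=> lt_i; rewrite coef_lift.
have w_proj : fweight B (with_head 0 (coef (lift_fact N y))) = f.
  rewrite fweight_blowup /= tail_weight_with_head.
  by rewrite (eq_tail_weight coef_lift_tail) tail_weight_apery.
apply: coef_inj => -[|j] lt_j; rewrite (coef_factorization_of blowup_gens_pos) //=.
- by rewrite apery_coef0.
- by rewrite size_blowup_gens in lt_j; rewrite coef_lift_tail.
Qed.

End Lift.

Section Proj.
Variables (N : nat) (c : {ffun 'I_(size S) -> 'I_(f + N * e).+1}).
Hypotheses (c_fact : c \in factorizations S (f + N * e)) (c_len : flen c = N).

Lemma fweight_proj : fweight B (with_head 0 (coef c)) = f.
Proof.
by rewrite fweight_blowup /= tail_weight_with_head (tail_weight_max_len c_fact).
Qed.

Lemma proj_factP : proj_fact c \in factorizations B f.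
Proof. exact: (factorization_ofP blowup_gens_pos fweight_proj). Qed.

Lemma flen_proj : flen (proj_fact c) = tail_len (coef c).
Proof. by rewrite (flen_factorization_of blowup_gens_pos fweight_proj) sum_blowup. Qed.

Lemma lift_proj : lift_fact N (proj_fact c) = c.
Proof.
have c_len' := c_len; rewrite flen_mingens in c_len'.
have len_proj : flen (proj_fact c) <= N.
  by rewrite flen_proj -[X in _ <= X]c_len' leq_addl.
apply: coef_inj => j lt_j; rewrite (coef_lift proj_factP len_proj) //.
case: j lt_j => [|j] lt_j /=.
  by rewrite flen_proj -[N in N - _]c_len' addnK.
by rewrite (coef_factorization_of blowup_gens_pos fweight_proj) // size_blowup_gens.
Qed.

End Proj.

Lemma ordg_shift N y :
  y \in factorizations B f -> flen y <= N -> ordg S (f + N * e) = N.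
Proof.
move=> y_fact y_len; apply/eqP; rewrite eqn_leq; apply/andP; split.
  by apply/bigmax_leqP => c; apply: flen_mingens_le.
by have := leq_flen_ordg (lift_factP y_fact y_len); rewrite flen_lift.
Qed.

Lemma inS_shift N y :
  y \in factorizations B f -> flen y <= N -> inS S (f + N * e).
Proof. by move=> y_fact y_len; apply: inS_factorization (lift_factP y_fact y_len). Qed.

Lemma adj_shift N y :
  y \in factorizations B f -> flen y <= N -> adj S e (f + N * e) = Posz f.
Proof.
by move=> y_fact y_len; rewrite /adj (ordg_shift y_fact y_len) PoszD GRing.addrK.
Qed.

Lemma dmax_shift N : ordg B f <= N -> dmax S (f + N * e) = nfact B f.
Proof.
move=> ord_N.
have len_N y : y \in factorizations B f -> flen y <= N.
  by move=> y_fact; apply: leq_trans (leq_flen_ordg y_fact) ord_N.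
case/andP: f_Apery => /set0Pn [y y_fact] _.
rewrite /dmax (ordg_shift y_fact (len_N y y_fact)) /nfact.
have -> : [set c in factorizations S (f + N * e) | flen c == N] =
          lift_fact N @: factorizations B f.
  apply/setP => c; rewrite inE; apply/andP/imsetP.
  - case=> c_fact /eqP c_len; exists (proj_fact c).
      exact: proj_factP c_fact c_len.
    by rewrite lift_proj.
  - by case=> y' y'_fact ->; rewrite lift_factP ?flen_lift ?len_N.
apply/card_in_imset/(can_in_inj (g := proj_fact (n := f + N * e))) => y' y'_fact.
exact: proj_lift (len_N y' y'_fact).
Qed.

End Blowup.

Theorem proposition3p4 (e : nat) (a : seq nat) (f : nat) :
  num_semigroup_mingens (e :: a) ->
  in_Apery (blowup_gens e a) e f ->
  let s := f + minordg (blowup_gens e a) f * e in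
  let s' := f + ordg (blowup_gens e a) f * e in
  [/\ inS (e :: a) s, inS (e :: a) s' &
      forall k : nat,
        adj (e :: a) e (s + k * e) = Posz f /\
        dmax (e :: a) (s' + k * e) = nfact (blowup_gens e a) f].
Proof.
case=> e_gt0 /(order_path_min ltn_trans) a_gt_e _ _ f_Ap s s'; rewrite /= in e_gt0.
have f_in : inS (blowup_gens e a) f by case/andP: f_Ap.
have [ym ym_fact ym_len] := minordg_attained (blowup_gens_pos e_gt0 a_gt_e) f_in.
have [yM yM_fact yM_len] := ordg_attained f_in.
rewrite /s /s'; split.
- exact: (inS_shift e_gt0 a_gt_e f_Ap ym_fact (eq_leq ym_len)).
- exact: (inS_shift e_gt0 a_gt_e f_Ap yM_fact (eq_leq yM_len)).
move=> k; rewrite -!addnA -!mulnDl; split.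
- by apply: (adj_shift e_gt0 a_gt_e f_Ap ym_fact); rewrite ym_len leq_addr.
- by apply: (dmax_shift e_gt0 a_gt_e f_Ap); rewrite leq_addr.
Qed.
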